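(* Let $G$ be a graph of order $n \ge 3$. Suppose that for every vertex $v \in V(G)$ and for all $u,w \in N(v)$ we have $\deg_{\langle N(v)\rangle}(u) + \deg_{\langle N(v)\rangle}(w) \ge \deg_G(v)$. Then $G$ is hamiltonian and $\{1,2\}$-extendable.
   Context: $N(v)$ denotes the open neighbourhood of $v$ and $\langle X\rangle$ the subgraph of $G$ induced by $X \subseteq V(G)$. A graph $G$ is $\{1,2\}$-extendable if for every non-hamiltonian cycle $C$ of $G$ there exists a cycle $C'$ of length $|C|+1$ or $|C|+2$ whose vertex set contains all vertices of $C$. *)

From mathcomp Require Import all_boot all_order.
Set Implicit Arguments. Unset Strict Implicit. Unset Printing Implicit Defensive.

Section Graphs.
Variable T : finType.
Variable e : rel T.

Definition simple_graph : Prop := symmetric e /\ irreflexive e.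

Definition nbhd (v : T) : {set T} := [set u | e v u].

Definition deg (v : T) : nat := #|nbhd v|.

Definition deg_in (X : {set T}) (u : T) : nat := #|[set x in X | e u x]|.

Definition connected_graph : Prop := forall x y : T, connect e x y.

Definition is_cycle (c : seq T) : Prop := [/\ 3 <= size c, uniq c & cycle e c].

Definition hamiltonian_cycle (c : seq T) : Prop := is_cycle c /\ size c = #|T|.

Definition hamiltonian : Prop := exists c, hamiltonian_cycle c.

Definition extendable12 : Prop :=
  forall c : seq T, is_cycle c -> size c < #|T| ->
    exists c2 : seq T, [/\ is_cycle c2, (size c2 == (size c).+1) || (size c2 == (size c).+2) & {subset c <= c2}].
End Graphs.

From mathcomp Require Import all_boot all_order zify.
From Stdlib Require Import Classical.
Set Implicit Arguments. Unset Strict Implicit. Unset Printing Implicit Defensive.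

(* Let C be a cycle that extends by neither one nor two vertices, and x a vertex
   off C with a neighbour on C.  For each neighbour s of x on C, the degree
   condition at s applied to x and the successor s+ says, by inclusion-exclusion,
   that s has at most as many neighbours adjacent to neither x nor s+ as common
   neighbours with x and s+.  Those common neighbours are again neighbours of x
   on C (otherwise C extends by two), and for such a y the successor map injects
   the s with y in N(s) ∩ N(x) ∩ N(s+) into the neighbours of y adjacent to
   neither x nor y+, missing x and y+ themselves (otherwise C extends by one).
   Summing over the neighbours of x on C yields 2 |N_C(x)| <= 0.  Hamiltonicity
   follows by repeatedly extending a triangle, which the degree condition
   provides. *)

Section NextInSeq.
Variable T : eqType.

Lemma next_head (s : T) p : next (s :: p) s = head s p.
Proof. by case: p => [|a p] /=; rewrite eqxx. Qed.

Lemma next_mid (s y : T) A B : uniq (s :: A ++ y :: B) ->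
  next (s :: A ++ y :: B) y = head s B.
Proof.
rewrite next_nth => /= /andP [sAyB]; rewrite cat_uniq => /and3P [_ /hasPn yA _].
have sy : (s == y) = false.
  by apply/negbTE; apply: contraNneq sAyB => ->; rewrite mem_cat mem_head orbT.
have yA' : (y \in A) = false by apply/negbTE/(yA y (mem_head _ _)).
rewrite inE mem_cat mem_head !orbT /= sy index_cat yA' /= eqxx addn0.
by rewrite nth_cat ltnNge leqnSn /= subSn // subnn; case: B {sAyB yA}.
Qed.

Lemma last_rev (x : T) s : last x (rev s) = head x s.
Proof. by case: s => //= y s; rewrite rev_cons last_rcons. Qed.

End NextInSeq.

Lemma exists_notin (T : finType) (c : seq T) : size c < #|T| -> exists w, w \notin c.
Proof.
move=> ltcT; apply/existsP; rewrite -negb_forall; apply: contraTN ltcT => /forallP inc.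
rewrite -leqNgt (leq_trans _ (card_size c)) // subset_leq_card //.
by apply/subsetP => w _; apply: inc.
Qed.

Section CycleSurgery.
Variable T : finType.
Variable e : rel T.

Definition extends_by (k : nat) (c c2 : seq T) :=
  [/\ is_cycle e c2, size c2 = k + size c & {subset c <= c2}].

Lemma is_cycle_rot_to (c : seq T) s : is_cycle e c -> s \in c ->
  exists2 p, is_cycle e (s :: p) &
    [/\ size (s :: p) = size c, c =i s :: p & next c =1 next (s :: p)].
Proof.
move=> [c3 Uc Cc] /rot_to [i p Ec]; exists p; rewrite -Ec.
  by split; rewrite ?size_rot ?rot_uniq ?rot_cycle.
by split=> [|z|z]; rewrite ?size_rot ?mem_rot ?next_rot.
Qed.

Lemma extends_by_insert1 c s z : is_cycle e c -> s \in c -> z \notin c ->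
  e s z -> e z (next c s) -> exists c2, extends_by 1 c c2.
Proof.
move=> Hc sc zc esz ezn.
have [p [p3 Up Cp] [Es Ec En] {Hc sc}] := is_cycle_rot_to Hc sc.
rewrite En next_head in ezn; rewrite Ec !inE negb_or in zc; case/andP: zc => zs zp.
exists [:: s, z & p]; rewrite /extends_by -Es; split=> //; last by move=> w; rewrite Ec !inE => /orP [] ->; rewrite ?orbT.
split; first exact: leq_trans p3 _.
  by move: Up => /= /andP [sp ->]; rewrite zp inE negb_or eq_sym zs sp.
by case: p {Up Es Ec En zp} p3 Cp ezn => [//|a p] _ /= /andP [_ ->] ->; rewrite esz.
Qed.

Lemma extends_by_insert2 c s z1 z2 : is_cycle e c -> s \in c ->
  z1 \notin c -> z2 \notin c -> z1 != z2 ->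
  e s z1 -> e z1 z2 -> e z2 (next c s) -> exists c2, extends_by 2 c c2.
Proof.
move=> Hc sc z1c z2c z12 esz1 ez12 ezn.
have [p [p3 Up Cp] [Es Ec En] {Hc sc}] := is_cycle_rot_to Hc sc.
rewrite En next_head in ezn; rewrite !Ec !inE !negb_or in z1c z2c.
case/andP: z1c => z1s z1p; case/andP: z2c => z2s z2p.
exists [:: s, z1, z2 & p]; rewrite /extends_by -Es; split=> //; last by move=> w; rewrite Ec !inE => /orP [] ->; rewrite ?orbT.
split=> //.
  move: Up => /= /andP [sp ->]; rewrite z2p !inE !negb_or z1p.
  by rewrite z12 eq_sym z1s eq_sym z2s sp.
by case: p {Up Es Ec En z1p z2p} p3 Cp ezn => [//|a p] _ /= /andP [_ ->] ->; rewrite esz1 ez12.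
Qed.

Hypothesis esym : symmetric e.

Lemma path_rev_rcons (y s : T) B : path e y (rcons B s) -> path e s (rcons (rev B) y).
Proof.
have := rev_path e y (rcons B s).
rewrite last_rcons belast_rcons rev_cons => ->.
by rewrite (@eq_path _ _ e) // => a b /=; rewrite esym.
Qed.

(* Given two neighbours s, y of x on c whose successors are adjacent, the cycle
   s A y B becomes x s (rev B) A y: the new edges are x s, s+ y+ and y x. *)
Lemma extends_by_cross c s y x : is_cycle e c -> s \in c -> y \in c -> s != y ->
  x \notin c -> e x s -> e x y -> e (next c s) (next c y) ->
  exists c2, extends_by 1 c c2.
Proof.
move=> Hc sc yc sy xc exs exy enn.
have [p [p3 Up Cp] [Es Ec En] {Hc sc}] := is_cycle_rot_to Hc sc.
have yp : y \in p by move: yc; rewrite Ec inE eq_sym (negbTE sy).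
case/splitPr: yp => A B in p3 Up Cp Es Ec En.
rewrite !En next_head next_mid // in enn.
have {}enn : e (head s B) (head y A) by rewrite esym; case: A {p3 Up Cp Es Ec En} enn.
set q := rev B ++ A ++ [:: y].
have Eq : perm_eq (s :: q) (s :: A ++ y :: B).
  by rewrite perm_cons perm_catC -catA perm_cat2l /= perm_cons perm_rev.
have xq : x \notin s :: q by rewrite (perm_mem Eq) -Ec.
exists (x :: s :: q); rewrite /extends_by -Es -(perm_size Eq); split=> //.
- split; first by rewrite -(perm_size Eq) in p3; exact: leqW p3.
    by rewrite cons_uniq xq (perm_uniq Eq).
  move: Cp; rewrite /= rcons_cat cat_path => /andP [pA] /= /andP [ly pyB].
  have := path_rev_rcons pyB; rewrite rcons_path => /andP [pB _].
  rewrite exs /= -cats1 -!catA cat_path pB cat_path /= last_rev.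
  by case: A {p3 Up Es Ec En q Eq xq} pA ly enn => [|a A] /= => [_ _ ->|/andP [_ ->] -> ->]; rewrite esym exy.
- by move=> w; rewrite Ec -(perm_mem Eq) !inE => ->; rewrite orbT.
Qed.

End CycleSurgery.

Lemma sum_card_exchange (I J : finType) (A : {set I}) (B : {set J}) (F : I -> {set J}) :
  \sum_(i in A) #|F i :&: B| = \sum_(j in B) #|[set i in A | j \in F i]|.
Proof.
under eq_bigr do rewrite -sum1_card.
under [RHS]eq_bigr do rewrite -sum1_card.
rewrite (exchange_big_dep (mem B)) /=; last by move=> i j _; rewrite inE => /andP [].
by apply: eq_bigr => j jB; apply: eq_bigl => i; rewrite !inE jB andbT.
Qed.

Section Connected.
Variable T : finType.
Variable e : rel T.
Hypothesis conn : connected_graph e.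

Lemma exists_edge_out (c : seq T) a w : a \in c -> w \notin c ->
  exists u x, [/\ u \in c, x \notin c & e u x].
Proof.
have /connectP [p] := conn a w.
elim: p a => [|b p IHp] a /= => [_ -> -> //|/andP [eab pb] wl ac wc].
case bc: (b \in c); first exact: IHp pb wl bc wc.
by exists a, b; rewrite bc.
Qed.

Hypothesis esym : symmetric e.

Lemma exists_two_nbrs : 2 < #|T| -> exists v a b, [/\ e v a, e v b & a != b].
Proof.
move=> T3; have /card_gt0P [a0 _] : 0 < #|T| by apply: leq_ltn_trans T3.
have [w1 w1a] := exists_notin (c := [:: a0]) (ltnW T3).
have [u1 [x1 [ua x1a eux1]]] := exists_edge_out (mem_head a0 [::]) w1a.
move: ua eux1; rewrite inE => /eqP -> eax1.
have [w2 w2c] := exists_notin (c := [:: a0; x1]) T3.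
have [u [x2 [uc x2c eux2]]] := exists_edge_out (mem_head a0 [:: x1]) w2c.
move: x1a x2c uc; rewrite !inE !negb_or => x1a /andP [x2a x2x1] /orP [] /eqP eu; subst u.
  by exists a0, x1, x2; rewrite eux2 eax1 eq_sym x2x1.
by exists x1, a0, x2; rewrite esym eax1 eux2 eq_sym x2a.
Qed.

End Connected.

Lemma hamiltonian_of_extendable12 (T : finType) (e : rel T) :
  (exists c, is_cycle e c) -> extendable12 e -> hamiltonian e.
Proof.
move=> [c0 Hc0] ext; have [n] := ubnP (#|T| - size c0).
elim: n c0 Hc0 => // n IHn c Hc ltn.
have le_cT : size c <= #|T| by case: Hc => _ Uc _; rewrite -(card_uniqP Uc) max_card.
have [lt_cT | ge_cT] := ltnP (size c) #|T|; last first.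
  by exists c; split=> //; apply/eqP; rewrite eqn_leq le_cT ge_cT.
have [c2 [Hc2 /orP sz2 _]] := ext c Hc lt_cT.
by apply: (IHn c2 Hc2); case: sz2 => /eqP ->; lia.
Qed.

Section DegreeCondition.
Variable T : finType.
Variable e : rel T.

Definition nbhdI (v a b : T) : {set T} := [set y | [&& e v y, e a y & e b y]].
Definition nbhdD (v a b : T) : {set T} := [set y | [&& e v y, ~~ e a y & ~~ e b y]].

Hypothesis esym : symmetric e.
Hypothesis eirr : irreflexive e.
Hypothesis deg_cond : forall v u w : T, u \in nbhd e v -> w \in nbhd e v -> u != w ->
  deg e v <= deg_in e (nbhd e v) u + deg_in e (nbhd e v) w.

Lemma card_nbhdD_le_nbhdI v a b : a \in nbhd e v -> b \in nbhd e v -> a != b ->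
  #|nbhdD v a b| <= #|nbhdI v a b|.
Proof.
move=> aN bN ab; have := deg_cond aN bN ab; rewrite /deg /deg_in.
set N := nbhd e v; set X := [set y in N | e a y]; set Y := [set y in N | e b y].
have -> : nbhdI v a b = X :&: Y by apply/setP => y; rewrite !inE; case: (e v y).
have -> : nbhdD v a b = N :\: (X :|: Y).
  by apply/setP => y; rewrite !inE; case: (e v y); rewrite /= ?andbT ?negb_or.
have XYN : X :|: Y \subset N by apply/subsetP => y; rewrite !inE => /orP [] /andP [].
have := cardsID (X :|: Y) N; rewrite (setIidPr XYN); have := cardsUI X Y; lia.
Qed.

Lemma exists_triangle v a b : e v a -> e v b -> a != b -> exists c, is_cycle e c.
Proof.
move=> eva evb ab.
have aN : a \in nbhd e v by rewrite inE.
have bN : b \in nbhd e v by rewrite inE.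
have deg2 : 2 <= deg e v.
  have <- : #|[set a; b]| = 2 by rewrite cards2 ab.
  by apply/subset_leq_card/subsetP => z; rewrite !inE => /orP [] /eqP ->.
have [a' eva' /card_gt0P [y]] : exists2 a', e v a' & 0 < deg_in e (nbhd e v) a'.
  have := deg_cond aN bN ab; case: (posnP (deg_in e (nbhd e v) a)) => [-> | ?].
    by move=> ?; exists b => //; lia.
  by exists a.
rewrite !inE => /andP [evy eay]; exists [:: v; a'; y]; split=> //=.
  have ne_of_e z t : e z t -> z != t by apply: contraTneq => ->; rewrite eirr.
  by rewrite !inE !negb_or !ne_of_e.
by rewrite eva' eay esym evy.
Qed.

Section NonExtendableCycle.
Variables (c : seq T) (x : T).
Hypothesis Hc : is_cycle e c.
Hypothesis xc : x \notin c.
Hypothesis no_ext1 : forall c2, ~ extends_by e 1 c c2.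
Hypothesis no_ext2 : forall c2, ~ extends_by e 2 c c2.

Definition cycle_nbrs : {set T} := [set s | (s \in c) && e x s].

Lemma cycle_nbr_succ_nonadj s : s \in c -> e x s -> ~~ e x (next c s).
Proof.
move=> sc exs; apply/negP => exn.
by have [c2] := extends_by_insert1 Hc sc xc (etrans (esym _ _) exs) exn; apply: no_ext1.
Qed.

Lemma cycle_nbr_succ_nonadj_out s y : s \in c -> e x s -> y \notin c -> e x y ->
  ~~ e y (next c s).
Proof.
move=> sc exs yc exy; apply/negP => eyn.
have xy : x != y by apply: contraTneq exy => ->; rewrite eirr.
have [c2] := extends_by_insert2 Hc sc xc yc xy (etrans (esym _ _) exs) exy eyn.
exact: no_ext2.
Qed.

Lemma cycle_nbr_succs_nonadj s y : s \in c -> y \in c -> s != y -> e x s -> e x y ->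
  ~~ e (next c s) (next c y).
Proof.
move=> sc yc sy exs exy; apply/negP => enn.
by have [c2] := extends_by_cross esym Hc sc yc sy xc exs exy enn; apply: no_ext1.
Qed.

Lemma nbhdI_succ_sub s : s \in cycle_nbrs -> nbhdI s x (next c s) \subset cycle_nbrs.
Proof.
rewrite inE => /andP [sc exs]; apply/subsetP => y; rewrite !inE => /and3P [esy exy eny].
rewrite exy andbT; apply: contraLR eny => yc.
by rewrite esym cycle_nbr_succ_nonadj_out.
Qed.

Lemma card_nbhdD_succ_le s : s \in cycle_nbrs ->
  #|nbhdD s x (next c s)| <= #|nbhdI s x (next c s)|.
Proof.
rewrite inE => /andP [sc exs]; apply: card_nbhdD_le_nbhdI.
- by rewrite inE esym.
- by rewrite inE next_cycle //; case: Hc.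
- by apply: contraNneq xc => ->; rewrite mem_next.
Qed.

Lemma card_pred_nbhdI_lt y : y \in cycle_nbrs ->
  #|[set s in cycle_nbrs | y \in nbhdI s x (next c s)]| + 2 <= #|nbhdD y x (next c y)|.
Proof.
rewrite inE => /andP [yc exy]; have [_ Uc Cc] := Hc.
have succ_inj : injective (next c) := can_inj (prev_next Uc).
set P := [set s in _ | _]; set D := nbhdD y x (next c y).
have xyD : [set x; next c y] \subset D.
  apply/subsetP => z; rewrite !inE => /orP [] /eqP ->.
    by rewrite esym exy eirr esym cycle_nbr_succ_nonadj.
  by rewrite next_cycle // cycle_nbr_succ_nonadj // eirr.
have PD : next c @: P \subset D :\: [set x; next c y].
  apply/subsetP => z /imsetP [s]; rewrite !inE => /andP [/andP [sc exs]].
  move=> /and3P [esy _ eny] ->.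
  have sy : s != y by apply: contraTneq esy => ->; rewrite eirr.
  rewrite negb_or (inj_eq succ_inj) sy esym eny cycle_nbr_succ_nonadj //= andbT.
  have -> : next c s != x by apply: contraNneq xc => <-; rewrite mem_next.
  by rewrite esym cycle_nbr_succs_nonadj // eq_sym.
have x_succ : #|[set x; next c y]| = 2.
  by rewrite cards2 (_ : x != next c y) //; apply: contraNneq xc => ->; rewrite mem_next.
rewrite -(card_imset _ succ_inj) -(cardsID [set x; next c y] D) (setIidPr xyD) x_succ.
by rewrite addnC leq_add2l subset_leq_card.
Qed.

Lemma cycle_nbrs_eq0 : cycle_nbrs = set0.
Proof.
set S := cycle_nbrs; apply/eqP; rewrite -cards_eq0.
have DI : \sum_(s in S) #|nbhdD s x (next c s)| <= \sum_(s in S) #|nbhdI s x (next c s)|.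
  by apply: leq_sum => s; apply: card_nbhdD_succ_le.
have IP : \sum_(s in S) #|nbhdI s x (next c s)| =
          \sum_(y in S) #|[set s in S | y \in nbhdI s x (next c s)]|.
  rewrite -sum_card_exchange; apply: eq_bigr => s sS.
  by rewrite (setIidPl (nbhdI_succ_sub sS)).
have PD : \sum_(y in S) (#|[set s in S | y \in nbhdI s x (next c s)]| + 2) <=
          \sum_(y in S) #|nbhdD y x (next c y)|.
  by apply: leq_sum => y; apply: card_pred_nbhdI_lt.
rewrite big_split sum_nat_const /= in PD; lia.
Qed.

End NonExtendableCycle.

Lemma extendable12_of_deg_cond : connected_graph e -> extendable12 e.
Proof.
move=> conn c Hc lt_cT.
have [c0 c0c] : exists c0, c0 \in c.
  by case: c Hc {lt_cT} => [[]//|a c _]; exists a; rewrite mem_head.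
have [w wc] := exists_notin lt_cT.
have [u [x [uc xc eux]]] := exists_edge_out conn c0c wc.
apply: NNPP => no_ext.
have no_ext1 c2 : ~ extends_by e 1 c c2.
  by move=> [c2C c2S c2c]; apply: no_ext; exists c2; rewrite c2S add1n eqxx.
have no_ext2 c2 : ~ extends_by e 2 c c2.
  by move=> [c2C c2S c2c]; apply: no_ext; exists c2; rewrite c2S add2n eqxx orbT.
have : u \in cycle_nbrs c x by rewrite inE uc esym.
by rewrite (cycle_nbrs_eq0 Hc xc no_ext1 no_ext2) inE.
Qed.

End DegreeCondition.

Theorem mainTheorem1 (T : finType) (e : rel T) :
  simple_graph e -> connected_graph e -> 3 <= #|T| ->
  (forall v u w : T, u \in nbhd e v -> w \in nbhd e v -> u != w ->
     deg e v <= deg_in e (nbhd e v) u + deg_in e (nbhd e v) w) ->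
  hamiltonian e /\ extendable12 e.
Proof.
move=> [esym eirr] conn T3 deg_cond.
have ext := extendable12_of_deg_cond esym eirr deg_cond conn.
split=> //; apply: hamiltonian_of_extendable12 ext.
have [v [a [b [eva evb ab]]]] := exists_two_nbrs conn esym T3.
exact: (exists_triangle esym eirr deg_cond eva evb ab).
Qed.
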